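(* Let $p$ be a prime, $n\ge 1$ an integer, $\mathbb{F}=\mathbb{F}_{p^n}$ and $F=|\mathbb{F}|=p^n$. Let $\theta,\gamma$ be real numbers. Suppose $f,g:\mathbb{F}\to[0,1]$ satisfy $f(m)\ge g(m)\ge 0$ for all $m\in\mathbb{F}$, and $\mathbb{E}(f)\ge \mathbb{E}(g)\ge F^{-\theta}$. If $$\|\hat f\|_{1/3}<F^{1+\gamma},$$ then $$\Lambda_3(f,g,f)\ \ge\ 10^{-10}p^{-8}F^{-12\theta-4\gamma}\quad\text{and}\quad \Lambda_3(g,f,f)\ \ge\ 10^{-10}p^{-8}F^{-12\theta-4\gamma}.$$
   Context: For $h:\mathbb{F}\to\mathbb{C}$, $\mathbb{E}(h)=F^{-1}\sum_{m\in\mathbb{F}}h(m)$. Identify $\mathbb{F}$ with $\mathbb{F}_p^n$ via a fixed standard $\mathbb{F}_p$-basis, and let $a\cdot m$ be the dot product with respect to this basis. With $\omega=e^{2\pi i/p}$, the Fourier transform is $\hat h(a)=\sum_{m\in\mathbb{F}}h(m)\omega^{a\cdot m}$. For $t>0$, $\|\hat h\|_t=\left(\sum_{a\in\mathbb{F}}|\hat h(a)|^t\right)^{1/t}$ (a quasinorm for $t<1$). For $f_1,f_2,f_3:\mathbb{F}\to\mathbb{C}$, $\Lambda_3(f_1,f_2,f_3)=F^{-2}\sum_{m,d\in\mathbb{F}}f_1(m)f_2(m+d)f_3(m+2d)$. *)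

From HB Require Import structures.
From mathcomp Require Import all_boot all_order all_algebra.
From mathcomp Require Import all_classical all_reals all_analysis.
From mathcomp Require Import complex.
Set Implicit Arguments. Unset Strict Implicit. Unset Printing Implicit Defensive.
Import Order.TTheory GRing.Theory Num.Theory.
Local Open Scope ring_scope.

(* The field F = F_{p^n} is identified (as an additive group with the
   standard F_p-basis) with row vectors 'rV['F_p]_n. *)
Notation FF p n := 'rV['F_p]_n.

Definition Fcard (R : realType) (p n : nat) : R := (p ^ n)%:R.

Definition Ex (R : realType) (p n : nat) (h : FF p n -> R) : R :=
  (Fcard R p n)^-1 * \sum_(m : FF p n) h m.

Definition dotF (p n : nat) (a m : FF p n) : 'F_p :=
  \sum_(i < n) a ord0 i * m ord0 i.

Definition omega (R : realType) (p : nat) : R[i] :=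
  (cos (2 * pi / p%:R) +i* sin (2 * pi / p%:R))%C.

Definition fourier (R : realType) (p n : nat) (h : FF p n -> R) (a : FF p n)
  : R[i] :=
  \sum_(m : FF p n) (h m)%:C%C * omega R p ^+ (val (dotF a m)).

Definition fnorm (R : realType) (p n : nat) (t : R) (h : FF p n -> R) : R :=
  powR (\sum_(a : FF p n) powR (Normc.normc (fourier h a)) t) t^-1.

Definition Lambda3 (R : realType) (p n : nat) (f1 f2 f3 : FF p n -> R) : R :=
  (Fcard R p n ^+ 2)^-1 *
  \sum_(m : FF p n) \sum_(d : FF p n) f1 m * f2 (m + d) * f3 (m + d *+ 2).

From HB Require Import structures.
From mathcomp Require Import all_boot all_order all_algebra.
From mathcomp Require Import all_classical all_reals all_analysis.
From mathcomp Require Import complex.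
From mathcomp Require Import ring lra.
Import Order.TTheory GRing.Theory Num.Theory.
Set Implicit Arguments. Unset Strict Implicit. Unset Printing Implicit Defensive.
Local Open Scope ring_scope.
Local Open Scope complex_scope.

(* With e(x) = omega^x, consider the twisted progression count
     U(xi) = sum_{m,d} f1(m) f2(m+d) f3(m+2d) e(xi.d).
   Summing over xi isolates d = 0, so sum_xi |U(xi)| >= F sum_m f1 f2 f3 >= F^2 delta^3,
   where delta = E(g) and the last step is the power-mean inequality (g <= f).
   Trivially |U(xi)| <= F^2 Lambda_3.  By Fourier inversion
   F U(xi) = sum_c hat f3(c) hat f1(c-xi) hat f2(xi-2c); bounding the factor that comes
   from g by F delta and using sum x_c^3 <= (sum x_c)^3 gives |U(xi)| <= delta w(xi)^3,
   where phi = |hat f|^{1/3} and w(xi) = sum_c phi(c) phi(c-xi) (or phi(xi-2c) when g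
   is in the middle), so that sum_xi w(xi) = (sum phi)^2.  Interpolating the two bounds on |U| and summing over xi
   yields F delta^4 <= Lambda_3 ||hat f||_{1/3}, i.e. Lambda_3 >= delta^4 F^-gamma,
   which dominates the stated bound. *)

Section RootOfUnity.
Variables (R : realType) (p : nat).
Local Notation w := (omega R p).

Lemma omegaX k :
  w ^+ k = cos (k%:R * (2 * pi / p%:R)) +i* sin (k%:R * (2 * pi / p%:R)).
Proof.
elim: k => [|k IHk]; first by rewrite expr0 !mul0r cos0 sin0.
rewrite exprSr IHk /omega -[k.+1]addn1 natrD (mulrDl k%:R 1) mul1r cosD sinD.
by apply/eqP; rewrite eq_complex /= [sin _ * cos _ + _]addrC !eqxx.
Qed.

Lemma normc_omegaX k : Normc.normc (w ^+ k) = 1.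
Proof. by rewrite omegaX /Normc.normc cos2Dsin2 sqrtr1. Qed.

Lemma omegaXp : (0 < p)%N -> w ^+ p = 1.
Proof.
move=> p_gt0; rewrite omegaX mulrCA mulfV ?pnatr_eq0 -?lt0n // mulr1.
by rewrite mulr_natl cos2pi sin2pi.
Qed.

Lemma omegaX_neq1 k : (0 < k < p)%N -> w ^+ k != 1.
Proof.
case/andP=> k_gt0 k_lt_p; have p_gt0 : (0 < p)%N := ltn_trans k_gt0 k_lt_p.
rewrite omegaX; apply/negP => /eqP [] cos_eq1 _.
(* cos (2y) = 1 - 2 sin(y)^2 < 1 as 0 < y < pi *)
pose y : R := pi * (k%:R / p%:R).
have y2 : k%:R * (2 * pi / p%:R) = y *+ 2.
  by rewrite /y -mulr_natr; field; rewrite pnatr_eq0 -lt0n.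
have sin_gt0 : 0 < sin y.
  apply: sin_gt0_pi; rewrite mulr_gt0 ?pi_gt0 ?divr_gt0 ?ltr0n //=.
  by rewrite gtr_pMr ?pi_gt0 // ltr_pdivrMr ?ltr0n // mul1r ltr_nat.
by move: cos_eq1; rewrite y2 cos_mulr2n cos2sin2; nra.
Qed.

End RootOfUnity.

Section ComplexNorm.
Variable R : realType.
Implicit Types (x : R) (z : R[i]).

Lemma normc_ge0 z : 0 <= Normc.normc z.
Proof. by case: z => a b; exact: sqrtr_ge0. Qed.

Lemma normc_real x : 0 <= x -> Normc.normc x%:C = x.
Proof. by move=> x_ge0; rewrite /Normc.normc /= expr0n addr0 sqrtr_sqr ger0_norm. Qed.

Lemma normc_sum_le (I : finType) (F : I -> R[i]) :
  Normc.normc (\sum_i F i) <= \sum_i Normc.normc (F i).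
Proof. exact: (@ler_norm_sum _ (Rcomplex R)). Qed.

End ComplexNorm.

Section DotProduct.
Variables p n : nat.
Implicit Types a b m : FF p n.

Lemma dotFC a m : dotF a m = dotF m a.
Proof. by apply: eq_bigr => i _; rewrite mulrC. Qed.

Lemma dotFDl a b m : dotF (a + b) m = dotF a m + dotF b m.
Proof. by rewrite /dotF -big_split; apply: eq_bigr => i _; rewrite !mxE mulrDl. Qed.

Lemma dotF0l m : dotF 0 m = 0.
Proof. by rewrite /dotF big1 // => i _; rewrite mxE mul0r. Qed.

Lemma dotF_delta i m : dotF (delta_mx 0 i) m = m 0 i.
Proof.
rewrite /dotF (bigD1 i) //= big1 ?addr0 => [|j /negPf ji]; first by rewrite mxE !eqxx mul1r.
by rewrite mxE ji andbF mul0r.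
Qed.

End DotProduct.

Section Averages.
Variables (R : realType) (p n : nat).
Hypothesis p_pr : prime p.
Local Notation N := (Fcard R p n).

Lemma card_FF : #|FF p n| = (p ^ n)%N.
Proof. by rewrite card_mx card_Fp // mul1n. Qed.

Lemma Fcard_gt0 : 0 < N.
Proof. by rewrite ltr0n expn_gt0 prime_gt0. Qed.

Lemma sum_Ex (h : FF p n -> R) : \sum_m h m = N * Ex h.
Proof. by rewrite /Ex mulrA mulfV ?mul1r // gt_eqF // Fcard_gt0. Qed.

Lemma Ex_le1 (h : FF p n -> R) : (forall m, h m <= 1) -> Ex h <= 1.
Proof.
move=> h_le1; rewrite -(ler_pM2l Fcard_gt0) -sum_Ex mulr1.
by apply: le_trans (ler_sum _ (fun m _ => h_le1 m)) _; rewrite sumr_const card_FF.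
Qed.

End Averages.

Section Characters.
Variables (R : realType) (p n : nat).
Hypothesis p_pr : prime p.
Local Notation N := (Fcard R p n).
Implicit Types (a b c m xi : FF p n) (x y : 'F_p).

Definition addchar (x : 'F_p) : R[i] := omega R p ^+ val x.

Definition chi (a m : FF p n) : R[i] := addchar (dotF a m).

Lemma addchar0 : addchar 0 = 1.
Proof. exact: expr0. Qed.

Lemma addcharD x y : addchar (x + y) = addchar x * addchar y.
Proof.
have omega_order : omega R p ^+ (Zp_trunc (pdiv p)).+2 = 1.
  by rewrite (Fp_cast p_pr) omegaXp ?prime_gt0.
rewrite /addchar -exprD [in RHS](divn_eq (val x + val y) (Zp_trunc (pdiv p)).+2).
by rewrite exprD mulnC exprM omega_order expr1n mul1r.
Qed.

Lemma addchar_neq1 x : x != 0 -> addchar x != 1.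
Proof.
move=> x_neq0; apply: omegaX_neq1; rewrite lt0n.
have -> : (val x != 0%N) by apply: contra x_neq0 => /eqP x0; apply/eqP/val_inj.
by rewrite -[X in (_ < X)%N](Fp_cast p_pr) ltn_ord.
Qed.

Lemma normc_addchar x : Normc.normc (addchar x) = 1.
Proof. exact: normc_omegaX. Qed.

Lemma chiC a m : chi a m = chi m a.
Proof. by rewrite /chi dotFC. Qed.

Lemma chiDl a b m : chi (a + b) m = chi a m * chi b m.
Proof. by rewrite /chi dotFDl addcharD. Qed.

Lemma chiDr a m m' : chi a (m + m') = chi a m * chi a m'.
Proof. by rewrite chiC chiDl -!(chiC a). Qed.

Lemma chi0l m : chi 0 m = 1.
Proof. by rewrite /chi dotF0l addchar0. Qed.

Lemma chi0r a : chi a 0 = 1.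
Proof. by rewrite chiC chi0l. Qed.

Lemma normc_chi a m : Normc.normc (chi a m) = 1.
Proof. exact: normc_addchar. Qed.

Lemma chi_progression xi c m (m' : FF p n) :
  chi xi (m' - m) * chi c (- (m + (m' - m) *+ 2)) = chi (c - xi) m * chi (xi - c *+ 2) m'.
Proof.
rewrite /chi -!addcharD; congr addchar.
by rewrite /dotF -!big_split /=; apply: eq_bigr => i _; rewrite !mxE; ring.
Qed.

Lemma sum_chi m : \sum_a chi a m = if m == 0 then N%:C else 0.
Proof.
have [->|m_neq0] := eqVneq m 0.
  under eq_bigr do rewrite chi0r.
  by rewrite sumr_const card_FF // /Fcard rmorph_nat.
have [i mi_neq0] : exists i, m 0 i != 0.
  apply/existsP; apply: contraR m_neq0 => /existsPn m0.
  by apply/eqP/rowP => j; rewrite mxE; apply/eqP/negbNE/m0.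
(* translating the summation variable by a0 multiplies the sum by chi a0 m != 1 *)
pose a0 : FF p n := delta_mx 0 i.
have chi_a0 : chi a0 m != 1 by rewrite /chi dotF_delta addchar_neq1.
have sumE : \sum_a chi a m = chi a0 m * \sum_a chi a m.
  rewrite mulr_sumr (reindex_inj (addrI a0)); apply: eq_bigr => a _.
  by rewrite chiDl.
apply/eqP; move/eqP: sumE; rewrite -subr_eq0 -{1}[\sum__ _]mul1r -mulrBl mulf_eq0.
by rewrite subr_eq0 eq_sym (negPf chi_a0).
Qed.

End Characters.

Section Fourier.
Variables (R : realType) (p n : nat).
Hypothesis p_pr : prime p.
Local Notation N := (Fcard R p n).
Implicit Types (h : FF p n -> R) (a c m xi z : FF p n).

Lemma fourierE h a : fourier h a = \sum_m (h m)%:C * chi R a m.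
Proof. by []. Qed.

Lemma normc_fourier_le h a :
  (forall m, 0 <= h m) -> Normc.normc (fourier h a) <= \sum_m h m.
Proof.
move=> h_ge0; apply: le_trans (normc_sum_le _) _; apply: ler_sum => m _.
by rewrite Normc.normcM normc_chi mulr1 normc_real.
Qed.

Lemma normc_fourier0 h : (forall m, 0 <= h m) -> Normc.normc (fourier h 0) = \sum_m h m.
Proof.
move=> h_ge0; rewrite fourierE; under eq_bigr do rewrite chi0l mulr1.
by rewrite -rmorph_sum normc_real ?sumr_ge0.
Qed.

Lemma fourier_inversion h z : N%:C * (h z)%:C = \sum_c fourier h c * chi R c (- z).
Proof.
under eq_bigr do rewrite fourierE mulr_suml.
rewrite exchange_big /=; under eq_bigr => m _ do under eq_bigr do rewrite -mulrA -chiDr //.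
under eq_bigr do rewrite -mulr_sumr sum_chi // subr_eq0.
rewrite (bigD1 z) //= eqxx big1 ?addr0 => [|m /negPf ->]; last by rewrite mulr0.
by rewrite mulrC.
Qed.

Definition twisted (f1 f2 f3 : FF p n -> R) xi : R[i] :=
  \sum_m \sum_d (f1 m * f2 (m + d) * f3 (m + d *+ 2))%:C * chi R xi d.

Lemma twisted_fourier (f1 f2 f3 : FF p n -> R) xi :
  N%:C * twisted f1 f2 f3 xi =
  \sum_c fourier f3 c * fourier f1 (c - xi) * fourier f2 (xi - c *+ 2).
Proof.
(* substitute y = m + d, then expand f3 (m + 2d) by Fourier inversion *)
have summandE m y :
    N%:C * ((f1 m * f2 (m + (y - m)) * f3 (m + (y - m) *+ 2))%:C * chi R xi (y - m)) =
    \sum_c fourier f3 c * ((f1 m)%:C * chi R (c - xi) m) * ((f2 y)%:C * chi R (xi - c *+ 2) y).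
  pose z := m + (y - m) *+ 2.
  rewrite subrKC !rmorphM -/z /=.
  transitivity ((f1 m)%:C * (f2 y)%:C * chi R xi (y - m) * (N%:C * (f3 z)%:C)).
    by ring.
  rewrite fourier_inversion mulr_sumr; apply: eq_bigr => c _.
  transitivity (fourier f3 c * (f1 m)%:C * (f2 y)%:C * (chi R xi (y - m) * chi R c (- z))).
    by ring.
  by rewrite chi_progression //; ring.
rewrite /twisted mulr_sumr.
transitivity (\sum_m \sum_y \sum_c fourier f3 c *
    ((f1 m)%:C * chi R (c - xi) m) * ((f2 y)%:C * chi R (xi - c *+ 2) y)).
  apply: eq_bigr => m _; rewrite mulr_sumr (reindex_inj (addIr (- m))) /=.
  by apply: eq_bigr => y _; rewrite summandE.
under eq_bigr do rewrite exchange_big /=.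
rewrite exchange_big /=; apply: eq_bigr => c _.
rewrite (fourierE f1) (fourierE f2) [fourier f3 c * _]mulr_sumr mulr_suml; apply: eq_bigr => m _.
by rewrite mulr_sumr.
Qed.

Lemma sum_twisted (f1 f2 f3 : FF p n -> R) :
  \sum_xi twisted f1 f2 f3 xi = N%:C * (\sum_m f1 m * f2 m * f3 m)%:C.
Proof.
rewrite /twisted exchange_big rmorph_sum mulr_sumr /=; apply: eq_bigr => m _.
rewrite exchange_big /=; under eq_bigr do rewrite -mulr_sumr sum_chi //.
rewrite (bigD1 0) //= eqxx big1 ?addr0 => [|d /negPf ->]; last by rewrite mulr0.
by rewrite mul0rn addr0 mulrC.
Qed.

Lemma Lambda3E (f1 f2 f3 : FF p n -> R) :
  N ^+ 2 * Lambda3 f1 f2 f3 = \sum_m \sum_d f1 m * f2 (m + d) * f3 (m + d *+ 2).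
Proof. by rewrite /Lambda3 mulrA mulfV ?mul1r // expf_neq0 // gt_eqF // Fcard_gt0. Qed.

Lemma normc_twisted_le (f1 f2 f3 : FF p n -> R) xi :
  (forall m, 0 <= f1 m) -> (forall m, 0 <= f2 m) -> (forall m, 0 <= f3 m) ->
  Normc.normc (twisted f1 f2 f3 xi) <= N ^+ 2 * Lambda3 f1 f2 f3.
Proof.
move=> f1_ge0 f2_ge0 f3_ge0; rewrite Lambda3E.
apply: le_trans (normc_sum_le _) _; apply: ler_sum => m _.
apply: le_trans (normc_sum_le _) _; apply: ler_sum => d _.
by rewrite Normc.normcM normc_chi mulr1 normc_real // !mulr_ge0.
Qed.

End Fourier.

Section CubeInequalities.
Variable R : realType.

Definition cbrt (x : R) : R := powR x 3%:R^-1.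

Lemma cbrt_ge0 x : 0 <= cbrt x.
Proof. exact: powR_ge0. Qed.

Lemma cbrtK x : 0 <= x -> cbrt x ^+ 3 = x.
Proof. by move=> x_ge0; rewrite -powR_mulrn ?cbrt_ge0 // -powRrM mulVf ?powRr1. Qed.

Lemma sum_expr3_le (I : finType) (a : I -> R) :
  (forall i, 0 <= a i) -> \sum_i a i ^+ 3 <= (\sum_i a i) ^+ 3.
Proof.
move=> a_ge0.
suff [] : \sum_i a i ^+ 3 <= (\sum_i a i) ^+ 3 /\ 0 <= \sum_i a i by [].
apply: (big_ind2 (fun x y => x <= y ^+ 3 /\ 0 <= y)) => [|x1 x2 y1 y2 [le1 ge1] [le2 ge2]|i _].
- by rewrite expr0n.
- split; last exact: addr_ge0.
  by apply: le_trans (lerD le1 le2) _; nra.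
- by split.
Qed.

Lemma mean_expr3_le (I : finType) (a : I -> R) (d : R) :
  0 <= d -> (forall i, 0 <= a i) -> \sum_i a i = #|I|%:R * d ->
  #|I|%:R * d ^+ 3 <= \sum_i a i ^+ 3.
Proof.
move=> d_ge0 a_ge0 sum_a.
(* the tangent line of x^3 at d lies below the cube on [0, +oo) *)
have tangent i : 3%:R * d ^+ 2 * a i - 2%:R * d ^+ 3 <= a i ^+ 3.
  have -> : a i ^+ 3 =
      3%:R * d ^+ 2 * a i - 2%:R * d ^+ 3 + (a i - d) ^+ 2 * (a i + 2%:R * d) by ring.
  by rewrite lerDl mulr_ge0 ?sqr_ge0 ?addr_ge0 ?mulr_ge0.
apply: le_trans (ler_sum _ (fun i _ => tangent i)).
suff -> : \sum_i (3%:R * d ^+ 2 * a i - 2%:R * d ^+ 3) = #|I|%:R * d ^+ 3 by [].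
by rewrite sumrB -mulr_sumr sum_a sumr_const -mulr_natr; ring.
Qed.

Lemma sum_le_interpolate (I : finType) (x w : I -> R) (T d : R) :
  0 <= T -> 0 <= d -> (forall i, 0 <= x i) -> (forall i, 0 <= w i) ->
  (forall i, x i <= T) -> (forall i, x i <= d * w i ^+ 3) ->
  (\sum_i x i) ^+ 3 <= T ^+ 2 * d * (\sum_i w i) ^+ 3.
Proof.
move=> T_ge0 d_ge0 x_ge0 w_ge0 x_le_T x_le_w.
pose M := cbrt (T ^+ 2 * d).
have M3 : M ^+ 3 = T ^+ 2 * d by rewrite cbrtK ?mulr_ge0 ?exprn_ge0.
(* x^3 = x^2 x <= T^2 (d w^3), so x <= cbrt (T^2 d) w *)
have x_le i : x i <= M * w i.
  rewrite -(ler_pXn2r (_ : 0 < 3)%N) ?nnegrE ?mulr_ge0 ?cbrt_ge0 //.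
  rewrite exprMn M3 -mulrA [x i ^+ 3]exprSr.
  apply: ler_pM; rewrite ?exprn_ge0 //; apply: lerXn2r; rewrite ?nnegrE //.
have sum_le : \sum_i x i <= M * \sum_i w i by rewrite mulr_sumr; apply: ler_sum.
rewrite -M3 -exprMn; apply: lerXn2r sum_le; rewrite nnegrE ?sumr_ge0 //.
by rewrite mulr_ge0 ?cbrt_ge0 ?sumr_ge0.
Qed.

Lemma normc_sum_mul3_le (I : finType) (a b e : I -> R[i]) (K : R) :
  0 <= K -> (forall i, Normc.normc (e i) <= K) ->
  Normc.normc (\sum_i a i * b i * e i) <=
    K * (\sum_i cbrt (Normc.normc (a i)) * cbrt (Normc.normc (b i))) ^+ 3.
Proof.
move=> K_ge0 e_le; apply: le_trans (normc_sum_le _) _.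
apply: le_trans (_ : _ <= K * \sum_i (cbrt (Normc.normc (a i)) * cbrt (Normc.normc (b i))) ^+ 3) _.
  rewrite mulr_sumr; apply: ler_sum => i _.
  rewrite !Normc.normcM exprMn !cbrtK ?normc_ge0 // mulrC.
  by apply: ler_wpM2r; rewrite ?mulr_ge0 ?normc_ge0.
by apply: ler_wpM2l => //; apply: sum_expr3_le => i; rewrite mulr_ge0 ?cbrt_ge0.
Qed.

Lemma sum_mul_shift (I : finType) (u v : I -> R) (h : I -> I -> I) :
  (forall c, injective (h c)) ->
  \sum_xi \sum_c u c * v (h c xi) = (\sum_c u c) * (\sum_c v c).
Proof.
move=> h_inj; rewrite exchange_big /= mulr_suml; apply: eq_bigr => c _.
by rewrite -mulr_sumr; congr (_ * _); symmetry; apply: reindex_inj.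
Qed.

End CubeInequalities.

Section CountingBound.
Variables (R : realType) (p n : nat).
Hypothesis p_pr : prime p.
Local Notation N := (Fcard R p n).

Lemma Lambda3_twisted_bound (f1 f2 f3 w : FF p n -> R) (d s : R) :
  (forall m, 0 <= f1 m) -> (forall m, 0 <= f2 m) -> (forall m, 0 <= f3 m) ->
  0 < d -> 0 <= s -> (forall xi, 0 <= w xi) -> \sum_xi w xi = s ^+ 2 ->
  (forall xi, Normc.normc (twisted f1 f2 f3 xi) <= d * w xi ^+ 3) ->
  N * d ^+ 3 <= \sum_m f1 m * f2 m * f3 m ->
  N * d ^+ 4 <= Lambda3 f1 f2 f3 * s ^+ 3.
Proof.
move=> f1_ge0 f2_ge0 f3_ge0 d_gt0 s_ge0 w_ge0 sum_w twisted_le diag_ge.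
have N_gt0 : 0 < N := Fcard_gt0 R n p_pr.
set L := Lambda3 f1 f2 f3.
have L_ge0 : 0 <= L.
  by rewrite -(pmulr_rge0 _ (exprn_gt0 2 N_gt0)) Lambda3E // !sumr_ge0 // => m _;
    apply: sumr_ge0 => e _; rewrite !mulr_ge0.
have sum_twisted_ge : N ^+ 2 * d ^+ 3 <= \sum_xi Normc.normc (twisted f1 f2 f3 xi).
  apply: le_trans (normc_sum_le _); rewrite sum_twisted // Normc.normcM.
  rewrite !normc_real ?(ltW N_gt0) ?sumr_ge0 // => [|m _]; last by rewrite !mulr_ge0.
  by rewrite expr2 -mulrA ler_pM2l.
have T_ge0 : 0 <= N ^+ 2 * L by rewrite mulr_ge0 // exprn_ge0 // ltW.
have interp := sum_le_interpolate T_ge0 (ltW d_gt0) (fun xi => normc_ge0 _) w_ge0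
  (fun xi => normc_twisted_le p_pr xi f1_ge0 f2_ge0 f3_ge0) twisted_le.
have cube_le : (N ^+ 2 * d ^+ 3) ^+ 3 <= (N ^+ 2 * L) ^+ 2 * d * (s ^+ 2) ^+ 3.
  rewrite -sum_w; apply: le_trans interp; apply: lerXn2r sum_twisted_ge.
    by rewrite nnegrE mulr_ge0 // exprn_ge0 // ltW.
  by rewrite nnegrE sumr_ge0 // => xi _; exact: normc_ge0.
have lhsE : (N ^+ 2 * d ^+ 3) ^+ 3 = (N ^+ 4 * d) * (N * d ^+ 4) ^+ 2 by ring.
have rhsE : (N ^+ 2 * L) ^+ 2 * d * (s ^+ 2) ^+ 3 = (N ^+ 4 * d) * (L * s ^+ 3) ^+ 2.
  by ring.
rewrite lhsE rhsE ler_pM2l ?mulr_gt0 ?exprn_gt0 // in cube_le.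
rewrite -(ler_pXn2r (_ : 0 < 2)%N) // nnegrE mulr_ge0 // exprn_ge0 //.
exact: ltW.
Qed.

End CountingBound.

Definition fourier_cbrt (R : realType) (p n : nat) (f : FF p n -> R) (c : FF p n) : R :=
  cbrt (Normc.normc (fourier f c)).

Lemma fourier_cbrtK (R : realType) (p n : nat) (f : FF p n -> R) (c : FF p n) :
  fourier_cbrt f c ^+ 3 = Normc.normc (fourier f c).
Proof. exact/cbrtK/normc_ge0. Qed.

Lemma fnorm_cbrt (R : realType) (p n : nat) (f : FF p n -> R) :
  fnorm 3%:R^-1 f = (\sum_c fourier_cbrt f c) ^+ 3.
Proof. by rewrite /fnorm invrK powR_mulrn // sumr_ge0 // => c _; exact: cbrt_ge0. Qed.

Section TwoFunctions.
Variables (R : realType) (p n : nat) (f g : FF p n -> R) (d : R).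
Hypotheses (p_pr : prime p) (f_ge0 : forall m, 0 <= f m) (g_ge0 : forall m, 0 <= g m).
Hypothesis sum_g : \sum_m g m = Fcard R p n * d.
Local Notation N := (Fcard R p n).
Local Notation phi := (fourier_cbrt f).

Let N_gt0 : 0 < N := Fcard_gt0 R n p_pr.

Let Nd_ge0 : 0 <= N * d.
Proof. by rewrite -sum_g sumr_ge0. Qed.

Let normc_fourier_g_le a : Normc.normc (fourier g a) <= N * d.
Proof. by rewrite -sum_g normc_fourier_le. Qed.

Let normc_mulN z : Normc.normc (N%:C * z) = N * Normc.normc z.
Proof. by rewrite Normc.normcM normc_real // ltW. Qed.

Lemma normc_twisted_fgf_le xi :
  Normc.normc (twisted f g f xi) <= d * (\sum_c phi c * phi (c - xi)) ^+ 3.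
Proof.
rewrite -(ler_pM2l N_gt0) -normc_mulN twisted_fourier // mulrA.
exact: normc_sum_mul3_le.
Qed.

Lemma normc_twisted_gff_le xi :
  Normc.normc (twisted g f f xi) <= d * (\sum_c phi c * phi (xi - c *+ 2)) ^+ 3.
Proof.
rewrite -(ler_pM2l N_gt0) -normc_mulN twisted_fourier // mulrA.
under eq_bigr do rewrite mulrAC.
exact: normc_sum_mul3_le.
Qed.

Let phi_ge0 c : 0 <= phi c.
Proof. exact: cbrt_ge0. Qed.

Let weight_ge0 (h : FF p n -> FF p n -> FF p n) xi : 0 <= \sum_c phi c * phi (h c xi).
Proof. by apply: sumr_ge0 => c _; rewrite mulr_ge0. Qed.

Let sum_phi_ge0 : 0 <= \sum_c phi c.
Proof. exact: sumr_ge0. Qed.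

Hypotheses (g_le_f : forall m, g m <= f m) (d_gt0 : 0 < d).

Lemma sum_gff_ge : N * d ^+ 3 <= \sum_m g m * f m * f m.
Proof.
have sum_g' : \sum_m g m = #|FF p n|%:R * d by rewrite sum_g card_FF.
have := mean_expr3_le (ltW d_gt0) g_ge0 sum_g'; rewrite card_FF // => /le_trans; apply.
apply: ler_sum => m _; rewrite exprS -mulrA -expr2.
by apply: ler_wpM2l => //; apply: lerXn2r; rewrite ?nnegrE.
Qed.

Lemma sum_phi_cube_ge : N * d <= (\sum_c phi c) ^+ 3.
Proof.
rewrite -sum_g; apply: le_trans (ler_sum _ (fun m _ => g_le_f m)) _.
rewrite -(normc_fourier0 f_ge0) -fourier_cbrtK; apply: lerXn2r; rewrite ?nnegrE //.
by rewrite (bigD1 0) //= lerDl sumr_ge0.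
Qed.

Lemma Lambda3_fgf_bound : N * d ^+ 4 <= Lambda3 f g f * (\sum_c phi c) ^+ 3.
Proof.
apply: (Lambda3_twisted_bound p_pr f_ge0 g_ge0 f_ge0 d_gt0 sum_phi_ge0
  (weight_ge0 (fun c xi => c - xi)) _ normc_twisted_fgf_le).
  by rewrite sum_mul_shift ?expr2 // => c; exact: can_inj (subKr c).
rewrite (eq_bigr (fun m => g m * f m * f m)) => [|m _]; last by rewrite [f m * g m]mulrC.
exact: sum_gff_ge.
Qed.

Lemma Lambda3_gff_bound : N * d ^+ 4 <= Lambda3 g f f * (\sum_c phi c) ^+ 3.
Proof.
apply: (Lambda3_twisted_bound p_pr g_ge0 f_ge0 f_ge0 d_gt0 sum_phi_ge0
  (weight_ge0 (fun c xi => xi - c *+ 2)) _ normc_twisted_gff_le).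
  by rewrite sum_mul_shift ?expr2 // => c; exact: addIr.
exact: sum_gff_ge.
Qed.

End TwoFunctions.

Lemma powR_bound_of_count (R : realType) (N d s L theta gamma : R) :
  0 < N -> 0 < d <= 1 -> powR N (- theta) <= d -> N * d <= s ^+ 3 ->
  s ^+ 3 < powR N (1 + gamma) -> N * d ^+ 4 <= L * s ^+ 3 ->
  powR N (- (12%:R * theta) - 4%:R * gamma) <= L.
Proof.
move=> N_gt0 /andP[d_gt0 d_le1] A_le_d Nd_le s3_lt count.
set A := powR N (- theta) in A_le_d *; set B := powR N gamma.
have B_gt0 : 0 < B := powR_gt0 _ N_gt0.
have N_neq0 : N != 0 by rewrite gt_eqF.
rewrite powRD ?N_neq0 ?implybT // powRr1 ?(ltW N_gt0) // -/B in s3_lt.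
have -> : powR N (- (12%:R * theta) - 4%:R * gamma) = A ^+ 12 / B ^+ 4.
  rewrite powRD ?N_neq0 ?implybT //; congr (_ * _).
    by rewrite -mulrN mulrC powRrM powR_mulrn ?powR_ge0.
  by rewrite powRN mulrC powRrM powR_mulrn ?powR_ge0.
have s3_gt0 : 0 < s ^+ 3 by apply: lt_le_trans Nd_le; rewrite mulr_gt0.
have d_lt_B : d < B by rewrite -(ltr_pM2l N_gt0); apply: le_lt_trans s3_lt.
have L_gt0 : 0 < L.
  by rewrite -(pmulr_lgt0 _ s3_gt0); apply: lt_le_trans count; rewrite mulr_gt0 ?exprn_gt0.
have d4_le : d ^+ 4 <= L * B.
  rewrite -(ler_pM2l N_gt0); apply: le_trans count _.
  by rewrite [N * _]mulrCA ler_pM2l // ltW.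
(* A^12 <= d^12 = d^4 d^8, and d <= 1, d < B leave the slack d^8 <= B^3 *)
have d8_le : d ^+ 8 <= B ^+ 3.
  apply: le_trans (ler_wiXn2l (ltW d_gt0) d_le1 (_ : 3 <= 8)%N) _ => //.
  by apply: lerXn2r; rewrite ?nnegrE ?ltW.
rewrite ler_pdivrMr ?exprn_gt0 //.
apply: le_trans (_ : d ^+ 4 * d ^+ 8 <= _).
  by rewrite -exprD; apply: lerXn2r; rewrite // nnegrE ?powR_ge0 // ltW.
have -> : L * B ^+ 4 = L * B * B ^+ 3 by ring.
exact: ler_pM (exprn_ge0 _ (ltW d_gt0)) (exprn_ge0 _ (ltW d_gt0)) d4_le d8_le.
Qed.

Lemma invX_mul_le1 (R : numFieldType) (a b : R) (k l : nat) :
  1 <= a -> 1 <= b -> (a ^+ k)^-1 * (b ^+ l)^-1 <= 1.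
Proof.
move=> a_ge1 b_ge1; have a_gt0 := lt_le_trans ltr01 a_ge1.
have b_gt0 := lt_le_trans ltr01 b_ge1.
by apply: mulr_ile1; rewrite ?invr_ge0 ?exprn_ge0 ?invf_le1 ?exprn_gt0 ?exprn_ege1 // ltW.
Qed.

Theorem corollary1 (R : realType) (p n : nat) (theta gamma : R)
  (f g : FF p n -> R) :
  prime p -> (1 <= n)%N ->
  (forall m, 0 <= f m <= 1) -> (forall m, 0 <= g m <= 1) ->
  (forall m, f m >= g m /\ g m >= 0) ->
  Ex f >= Ex g -> Ex g >= powR (Fcard R p n) (- theta) ->
  fnorm (3%:R^-1) f < powR (Fcard R p n) (1 + gamma) ->
  Lambda3 f g f >= (10 ^+ 10)^-1 * (p%:R ^+ 8)^-1
                    * powR (Fcard R p n) (- (12%:R * theta) - 4%:R * gamma)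
  /\ Lambda3 g f f >= (10 ^+ 10)^-1 * (p%:R ^+ 8)^-1
                    * powR (Fcard R p n) (- (12%:R * theta) - 4%:R * gamma).
Proof.
move=> p_pr _ f01 g01 fg _ Eg_ge fnorm_lt.
have f_ge0 m : 0 <= f m by case/andP: (f01 m).
have g_ge0 m : 0 <= g m by case/andP: (g01 m).
have g_le_f m : g m <= f m by case: (fg m).
have N_gt0 := Fcard_gt0 R n p_pr.
have d_gt0 : 0 < Ex g := lt_le_trans (powR_gt0 _ N_gt0) Eg_ge.
have d_le1 : Ex g <= 1 by apply: Ex_le1 => // m; case/andP: (g01 m).
have sum_g := sum_Ex p_pr g.
rewrite fnorm_cbrt in fnorm_lt.
have c_le1 : (10 ^+ 10)^-1 * (p%:R ^+ 8)^-1 <= 1 :> R.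
  by apply: invX_mul_le1; rewrite ler1n // prime_gt0.
have lower L : Fcard R p n * Ex g ^+ 4 <= L * (\sum_c fourier_cbrt f c) ^+ 3 ->
    (10 ^+ 10)^-1 * (p%:R ^+ 8)^-1 *
      powR (Fcard R p n) (- (12%:R * theta) - 4%:R * gamma) <= L.
  move=> count; apply: le_trans (ler_piMl (powR_ge0 _ _) c_le1) _.
  apply: powR_bound_of_count count; rewrite ?d_gt0 ?d_le1 //.
  exact: sum_phi_cube_ge f_ge0 sum_g g_le_f.
by split; apply: lower; [exact: Lambda3_fgf_bound | exact: Lambda3_gff_bound].
Qed.
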